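(* There is an absolute constant $C>0$ such that the following holds. Let $G=(V,E)$ be an $(n,d,\lambda)$-expander. Then for every rule $\mathcal{R}$ and every starting vertex, the greedy random walk on $G$ satisfies \[ \mathbb{E}[C_E(G)] \le |E| + C\,\frac{n\log n}{1-\lambda}. \] In particular, for a family of such expanders with $\lambda$ bounded away from $1$ and $d=\Omega(\log n)$, the expected edge cover time is $O(|E|)$.
   Context: A greedy random walk (GRW) on a connected locally finite graph $G=(V,E)$ with rule $\mathcal{R}$ started at $v_0$: $X_0=v_0$; with $H_t=\{\{X_{s-1},X_s\}:0<s\le t\}$ and $J_t(v)=\{e\in E: v\in e, e\notin H_t\}$, if $J_t(X_t)\ne\emptyset$ then $X_{t+1}=w$ for some $w$ with $\{X_t,w\}\in J_t(X_t)$, chosen according to an arbitrary (possibly randomized, history-dependent) rule $\mathcal{R}$; if $J_t(X_t)=\emptyset$ then $X_{t+1}$ is a uniformly random neighbor of $X_t$. $C_E(G)=\min\{t:H_t=E\}$ is the edge cover time. For a $d$-regular graph $G$ on $n$ vertices let $A$ be its normalized adjacency matrix ($A(u,v)=1/d$ if $\{u,v\}\in E$, $0$ otherwise), with eigenvalues $1=\lambda_1\ge\lambda_2\ge\dots\ge\lambda_n\ge-1$, and $\lambda(G)=\max_{2\le i\le n}|\lambda_i|$. $G$ is an $(n,d,\lambda)$-expander if it is $d$-regular on $n$ vertices and $\lambda(G)<\lambda<1$. *)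

From Stdlib Require Import Reals List Bool Arith Relations.
Import ListNotations.
Open Scope R_scope.

(* Vertices of a graph on n vertices are the naturals 0..n-1;
   the graph is given by a boolean adjacency relation adj. *)

Fixpoint rsum (k : nat) (f : nat -> R) : R :=
  match k with O => 0 | S k' => rsum k' f + f k' end.

Definition lsum (l : list R) : R := fold_right Rplus 0 l.

Definition isE (n : nat) (adj : nat -> nat -> bool) (u v : nat) : bool :=
  Nat.ltb u n && Nat.ltb v n && adj u v.

Definition simple_graph (n : nat) (adj : nat -> nat -> bool) : Prop :=
  (forall u v, adj u v = adj v u) /\ (forall u, adj u u = false).

Definition connected (n : nat) (adj : nat -> nat -> bool) : Prop :=
  forall u v, (u < n)%nat -> (v < n)%nat ->
    clos_refl_trans nat (fun a b => isE n adj a b = true) u v.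

Definition regular (n d : nat) (adj : nat -> nat -> bool) : Prop :=
  forall u, (u < n)%nat -> length (filter (isE n adj u) (seq 0 n)) = d.

Definition edge_count (n : nat) (adj : nat -> nat -> bool) : nat :=
  list_sum (map (fun u => length (filter (fun v => Nat.ltb u v && isE n adj u v)
                                         (seq 0 n))) (seq 0 n)).

Definition Aop (n d : nat) (adj : nat -> nat -> bool) (x : nat -> R) (u : nat) : R :=
  rsum n (fun w => (if isE n adj u w then / INR d else 0) * x w).

Definition inner (n : nat) (x y : nat -> R) : R := rsum n (fun u => x u * y u).

(* Spectrum of the (symmetric) matrix A listed with multiplicity as
   mu 0 >= mu 1 >= ... >= mu (n-1) (i.e. lambda_1 >= ... >= lambda_n),
   witnessed by an orthonormal eigenbasis vec 0, ..., vec (n-1);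
   lambda(G) < lam  means  |lambda_i| < lam for 2 <= i <= n. *)
Definition lambdaG_lt (n d : nat) (adj : nat -> nat -> bool) (lam : R) : Prop :=
  exists (mu : nat -> R) (vec : nat -> nat -> R),
    (forall i j, (i < n)%nat -> (j < n)%nat ->
        inner n (vec i) (vec j) = if Nat.eqb i j then 1 else 0) /\
    (forall i u, (i < n)%nat -> (u < n)%nat ->
        Aop n d adj (vec i) u = mu i * vec i u) /\
    (forall i j, (i <= j)%nat -> (j < n)%nat -> mu j <= mu i) /\
    (forall i, (1 <= i)%nat -> (i < n)%nat -> Rabs (mu i) < lam).

Definition expander (n d : nat) (adj : nat -> nat -> bool) (lam : R) : Prop :=
  simple_graph n adj /\ regular n d adj /\ lambdaG_lt n d adj lam /\ lam < 1.

Fixpoint steps (p : list nat) : list (nat * nat) :=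
  match p with
  | a :: ((b :: _) as q) => (a, b) :: steps q
  | _ => []
  end.

Definition same_edge (e : nat * nat) (u v : nat) : bool :=
  (Nat.eqb (fst e) u && Nat.eqb (snd e) v) || (Nat.eqb (fst e) v && Nat.eqb (snd e) u).

Definition traversed (p : list nat) (u v : nat) : bool :=
  existsb (fun e => same_edge e u v) (steps p).

(* history hist = [X_0; ...; X_t]; current vertex X_t *)
Definition cur (hist : list nat) : nat := last hist 0%nat.

Definition unused_at (n : nat) (adj : nat -> nat -> bool) (hist : list nat) (w : nat) : bool :=
  isE n adj (cur hist) w && negb (traversed hist (cur hist) w).

Definition has_unused (n : nat) (adj : nat -> nat -> bool) (hist : list nat) : bool :=
  existsb (unused_at n adj hist) (seq 0 n).

(* A rule: given the history [X_0;...;X_t], a probability distribution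
   (weights) on the next vertex.  It is only used when J_t(X_t) is nonempty,
   and must then be supported on the unused incident edges. *)
Definition rule := list nat -> nat -> R.

Definition valid_rule (n : nat) (adj : nat -> nat -> bool) (Rl : rule) : Prop :=
  forall hist, has_unused n adj hist = true ->
    (forall w, 0 <= Rl hist w) /\
    (forall w, Rl hist w <> 0 -> unused_at n adj hist w = true) /\
    rsum n (Rl hist) = 1.

Definition trans (n d : nat) (adj : nat -> nat -> bool) (Rl : rule)
    (hist : list nat) (w : nat) : R :=
  if has_unused n adj hist then Rl hist w
  else if isE n adj (cur hist) w then / INR d else 0.

Fixpoint pprob (n d : nat) (adj : nat -> nat -> bool) (Rl : rule)
    (hist ws : list nat) : R :=
  match ws with
  | [] => 1
  | w :: ws' => trans n d adj Rl hist w * pprob n d adj Rl (hist ++ [w]) ws'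
  end.

Fixpoint all_seqs (n t : nat) : list (list nat) :=
  match t with
  | O => [[]]
  | S t' => flat_map (fun w => map (cons w) (all_seqs n t')) (seq 0 n)
  end.

Definition covered (n : nat) (adj : nat -> nat -> bool) (p : list nat) : bool :=
  forallb (fun u => forallb (fun v => implb (isE n adj u v) (traversed p u v))
                            (seq 0 n)) (seq 0 n).

(* C_E = t  for the path X_0..X_t = v0 :: ws  (t = length ws) *)
Definition cover_exactly (n : nat) (adj : nat -> nat -> bool) (v0 : nat) (ws : list nat) : bool :=
  match ws with
  | [] => covered n adj [v0]
  | _ => covered n adj (v0 :: ws) && negb (covered n adj (removelast (v0 :: ws)))
  end.

Definition prob_cover_le (n d : nat) (adj : nat -> nat -> bool) (Rl : rule) (v0 T : nat) : R :=
  lsum (map (fun ws => pprob n d adj Rl [v0] ws * (if covered n adj (v0 :: ws) then 1 else 0))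
            (all_seqs n T)).

Definition prob_cover_eq (n d : nat) (adj : nat -> nat -> bool) (Rl : rule) (v0 t : nat) : R :=
  lsum (map (fun ws => pprob n d adj Rl [v0] ws * (if cover_exactly n adj v0 ws then 1 else 0))
            (all_seqs n t)).

(* E[C_E] <= B : C_E is a.s. finite (otherwise E[C_E] = +infinity) and
   sum_t t * P(C_E = t) <= B. *)
Definition expected_cover_le (n d : nat) (adj : nat -> nat -> bool) (Rl : rule)
    (v0 : nat) (B : R) : Prop :=
  (forall eps, 0 < eps -> exists T, 1 - eps <= prob_cover_le n d adj Rl v0 T) /\
  (forall T, rsum (S T) (fun t => INR t * prob_cover_eq n d adj Rl v0 t) <= B).

(* Optional stopping for a potential function. Let U be the set of vertices that still
   carry an unused edge and k = |U|. Take
     Phi = (number of unused edges) + F(k) + h_U(X_t),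
   where h_U(x) is twice the expected time, truncated at T_k, for the simple random walk
   from x to hit U, and F(k) = sum_(j < k) 2 T_j. A greedy step uses up an edge, lowering
   the first term by one, and cannot raise the rest: U only shrinks, and the budget
   F(k) - F(k') pays for the new h_U'. A random step changes neither the edges nor U and
   lowers h_U by 1 in expectation, as long as the walk hits U within T_k steps with
   probability >= 1/2. This is where expansion enters: the L2 mass of the walk killed on U
   decays by a factor 1 - (1 - lam^2) k / n per step, after which the walk mixes in
   O(log n / (1 - lam)) steps. So T_k = O((n / k + log n) / (1 - lam)), the harmonic sum
   gives F(n + 1) = O(n log n / (1 - lam)), and E[C_E] <= Phi(start) <= |E| + F(n + 1). *)

From Stdlib Require Import Reals Lia Lra Psatz List Bool ZArith FunctionalExtensionality Classical.
From mathcomp Require ssreflect ssrbool ssrfun eqtype ssrnat fintype bigop ssralg matrix Rstruct.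
Import ListNotations.
Open Scope R_scope.
Set Bullet Behavior "Strict Subproofs".

Lemma rsum_ext k f g : (forall i, (i < k)%nat -> f i = g i) -> rsum k f = rsum k g.
Proof.
  induction k; intros H; simpl; auto.
  rewrite IHk by (intros; apply H; lia). rewrite H by lia. reflexivity.
Qed.

Lemma rsum_add k f g : rsum k (fun i => f i + g i) = rsum k f + rsum k g.
Proof. induction k; simpl; [lra | rewrite IHk; lra]. Qed.

Lemma rsum_sub k f g : rsum k (fun i => f i - g i) = rsum k f - rsum k g.
Proof. induction k; simpl; [lra | rewrite IHk; lra]. Qed.

Lemma rsum_mult_l k c f : rsum k (fun i => c * f i) = c * rsum k f.
Proof. induction k; simpl; [lra | rewrite IHk; lra]. Qed.

Lemma rsum_mult_r k c f : rsum k (fun i => f i * c) = rsum k f * c.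
Proof. induction k; simpl; [lra | rewrite IHk; lra]. Qed.

Lemma rsum_const k c : rsum k (fun _ => c) = INR k * c.
Proof. induction k; simpl rsum; [simpl; lra |]. rewrite IHk, S_INR; lra. Qed.

Lemma rsum_zero k : rsum k (fun _ => 0) = 0.
Proof. rewrite rsum_const; ring. Qed.

Lemma rsum_le k f g : (forall i, (i < k)%nat -> f i <= g i) -> rsum k f <= rsum k g.
Proof.
  induction k; intros H; simpl; [lra |].
  assert (rsum k f <= rsum k g) by (apply IHk; intros; apply H; lia).
  assert (f k <= g k) by (apply H; lia). lra.
Qed.

Lemma rsum_nonneg k f : (forall i, (i < k)%nat -> 0 <= f i) -> 0 <= rsum k f.
Proof. intros H. rewrite <- (rsum_zero k). apply rsum_le; auto. Qed.

Lemma rsum_swap k m f :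
  rsum k (fun i => rsum m (fun j => f i j)) = rsum m (fun j => rsum k (fun i => f i j)).
Proof.
  induction k; simpl.
  - rewrite rsum_zero; auto.
  - rewrite IHk, <- rsum_add. reflexivity.
Qed.

Lemma rsum_Sl k f : rsum (S k) f = f 0%nat + rsum k (fun i => f (S i)).
Proof. induction k; simpl; [lra |]. simpl in IHk. rewrite IHk. lra. Qed.

Lemma rsum_delta k i a : (i < k)%nat ->
  rsum k (fun j => if Nat.eqb i j then a j else 0) = a i.
Proof.
  induction k; intros H; [lia |]. simpl.
  destruct (Nat.eqb_spec i k).
  - subst. rewrite (rsum_ext _ _ (fun _ => 0)).
    + rewrite rsum_zero; lra.
    + intros j Hj. destruct (Nat.eqb_spec k j); [lia | auto].
  - rewrite IHk by lia. lra.
Qed.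

Lemma rsum_term_le k f i : (forall j, (j < k)%nat -> 0 <= f j) -> (i < k)%nat ->
  f i <= rsum k f.
Proof.
  induction k; intros H Hi; [lia |]. simpl.
  assert (0 <= rsum k f) by (apply rsum_nonneg; intros; apply H; lia).
  assert (0 <= f k) by (apply H; lia).
  destruct (Nat.eq_dec i k).
  - subst; lra.
  - assert (f i <= rsum k f) by (apply IHk; [intros; apply H; lia | lia]). lra.
Qed.

Lemma rsum_le_gap k f g a c : (forall i, (i < k)%nat -> f i <= g i) -> (a < k)%nat ->
  f a + c <= g a -> rsum k f + c <= rsum k g.
Proof.
  induction k; intros H Ha Hc; [lia |]. simpl.
  assert (Hk : f k <= g k) by (apply H; lia).
  destruct (Nat.eq_dec a k).
  - subst. assert (rsum k f <= rsum k g) by (apply rsum_le; intros; apply H; lia). lra.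
  - assert (rsum k f + c <= rsum k g) by (apply IHk; [intros; apply H; lia | lia | auto]).
    lra.
Qed.

Lemma rsum_mul_rsum k m f g :
  rsum k f * rsum m g = rsum k (fun i => rsum m (fun j => f i * g j)).
Proof.
  rewrite <- rsum_mult_r. apply rsum_ext. intros i _. rewrite rsum_mult_l. reflexivity.
Qed.

(* Lagrange's identity: the gap is half the sum of the squares (a_i b_j - a_j b_i)^2. *)
Lemma cauchy_schwarz k a b :
  (rsum k (fun i => a i * b i))^2 <= rsum k (fun i => a i ^ 2) * rsum k (fun i => b i ^ 2).
Proof.
  set (D := fun i j => a i ^ 2 * b j ^ 2 - (a i * b i) * (a j * b j)).
  assert (Egap : rsum k (fun i => a i ^ 2) * rsum k (fun i => b i ^ 2)
                 - (rsum k (fun i => a i * b i))^2 = rsum k (fun i => rsum k (fun j => D i j))).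
  { replace ((rsum k (fun i => a i * b i))^2)
      with (rsum k (fun i => a i * b i) * rsum k (fun i => a i * b i)) by ring.
    rewrite !rsum_mul_rsum, <- rsum_sub.
    apply rsum_ext. intros i _. rewrite <- rsum_sub. reflexivity. }
  assert (Elagrange : 2 * rsum k (fun i => rsum k (fun j => D i j)) =
            rsum k (fun i => rsum k (fun j => (a i * b j - a j * b i)^2))).
  { replace (2 * rsum k (fun i => rsum k (fun j => D i j))) with
      (rsum k (fun i => rsum k (fun j => D i j)) + rsum k (fun i => rsum k (fun j => D j i)))
      by (rewrite (rsum_swap k k (fun i j => D j i)); lra).
    rewrite <- rsum_add. apply rsum_ext. intros i _.
    rewrite <- rsum_add. apply rsum_ext. intros j _. unfold D. ring. }
  assert (0 <= rsum k (fun i => rsum k (fun j => (a i * b j - a j * b i)^2))).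
  { apply rsum_nonneg; intros; apply rsum_nonneg; intros. apply pow2_ge_0. }
  lra.
Qed.

Section OrthonormalBasis.
Import ssreflect ssrbool ssrfun eqtype ssrnat fintype bigop ssralg matrix Rstruct.
Import GRing.Theory.

Lemma rsum_big (k : nat) (F : nat -> R) : rsum k F = (\sum_(i < k) F (nat_of_ord i))%R.
Proof.
elim: k => [|k IH]; first by rewrite big_ord0.
by rewrite big_ord_recr /= IH.
Qed.

(* n orthonormal vectors of R^n form a square matrix V with V V^T = 1, hence V^T V = 1. *)
Lemma orthonormal_complete (n : nat) (vec : nat -> nat -> R) :
  (forall i j, (i < n)%coq_nat -> (j < n)%coq_nat ->
     rsum n (fun u => vec i u * vec j u) = if Nat.eqb i j then 1 else 0) ->
  forall u w, (u < n)%coq_nat -> (w < n)%coq_nat ->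
     rsum n (fun i => vec i u * vec i w) = if Nat.eqb u w then 1 else 0.
Proof.
move=> Horth u w Hu Hw.
pose V : 'M[R]_n := (\matrix_(i < n, j < n) vec i j)%R.
have VVt : (V *m V^T = 1%:M)%R.
  apply/matrixP => i j; rewrite !mxE.
  under eq_bigr do rewrite !mxE.
  rewrite -(rsum_big n (fun k => vec i k * vec j k)) Horth; try exact/ltP.
  case: (Nat.eqb_spec i j) => [/val_inj -> | Hne]; first by rewrite eqxx.
  by case: eqP => // E; case: Hne; rewrite E.
have := congr1 (fun M : 'M[R]_n => M (Ordinal (introT ltP Hu)) (Ordinal (introT ltP Hw)))
  (mulmx1C VVt).
rewrite /= !mxE.
under eq_bigr do rewrite !mxE.
rewrite -(rsum_big n (fun i => vec i u * vec i w)) => ->.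
case: (Nat.eqb_spec u w) => [E | Hne].
  by subst; rewrite (_ : (_ == _) = true) //; apply/eqP; exact: val_inj.
by case: eqP => // E; case: Hne; exact: (congr1 val E).
Qed.

End OrthonormalBasis.

Lemma isE_inv n adj u v :
  isE n adj u v = true -> (u < n)%nat /\ (v < n)%nat /\ adj u v = true.
Proof.
  unfold isE. intros H. apply andb_prop in H as [H1 H2]. apply andb_prop in H1 as [H1 H3].
  apply Nat.ltb_lt in H1. apply Nat.ltb_lt in H3. auto.
Qed.

Lemma isE_sym n adj u v : simple_graph n adj -> isE n adj u v = isE n adj v u.
Proof.
  intros [Hs _]. unfold isE. rewrite Hs.
  destruct (Nat.ltb u n), (Nat.ltb v n); reflexivity.
Qed.

Lemma isE_irrefl n adj u : simple_graph n adj -> isE n adj u u = false.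
Proof. intros [_ Hi]. unfold isE. rewrite Hi. apply andb_false_r. Qed.

Lemma length_filter_seq (p : nat -> bool) k :
  INR (length (filter p (seq 0 k))) = rsum k (fun w => if p w then 1 else 0).
Proof.
  induction k; [simpl; auto |].
  rewrite seq_S, filter_app, length_app, plus_INR, IHk. simpl.
  destruct (p k); simpl; lra.
Qed.

Lemma regular_degree n d adj x : regular n d adj -> (x < n)%nat ->
  rsum n (fun w => if isE n adj x w then 1 else 0) = INR d.
Proof. intros Hr Hx. rewrite <- length_filter_seq, Hr; auto. Qed.

Lemma inner_ext n f f' g g' : (forall u, (u < n)%nat -> f u = f' u) ->
  (forall u, (u < n)%nat -> g u = g' u) -> inner n f g = inner n f' g'.
Proof. intros H1 H2. unfold inner. apply rsum_ext. intros. rewrite H1, H2; auto. Qed.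

Lemma inner_one_sq_le n f : (inner n f (fun _ => 1))^2 <= INR n * inner n f f.
Proof.
  assert (H := cauchy_schwarz n f (fun _ => 1)). cbv beta in H.
  rewrite (rsum_ext n (fun i => 1 ^ 2) (fun _ => 1)), rsum_const in H by (intros; ring).
  unfold inner. rewrite (rsum_ext n (fun u => f u * f u) (fun i => f i ^ 2)) by (intros; ring).
  lra.
Qed.

Lemma inv_INR_nonneg d : 0 <= / INR d.
Proof.
  destruct d; [simpl; rewrite Rinv_0; lra |].
  apply Rlt_le, Rinv_0_lt_compat, lt_0_INR. lia.
Qed.

Section Operator.
Context (n d : nat) (adj : nat -> nat -> bool).

Let A := Aop n d adj.

Lemma Aop_ext f g x : (forall w, (w < n)%nat -> f w = g w) -> A f x = A g x.
Proof. intros H. unfold A, Aop. apply rsum_ext. intros. rewrite H; auto. Qed.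

Lemma Aop_lin x f g a b : A (fun w => a * f w + b * g w) x = a * A f x + b * A g x.
Proof.
  unfold A, Aop. rewrite <- !rsum_mult_l, <- rsum_add. apply rsum_ext. intros; ring.
Qed.

Lemma Aop_mono f g x : (forall w, (w < n)%nat -> f w <= g w) -> A f x <= A g x.
Proof.
  intros H. unfold A, Aop. apply rsum_le. intros w Hw.
  assert (Hinv := inv_INR_nonneg d).
  specialize (H w Hw). destruct (isE n adj x w); nra.
Qed.

Lemma Aop_nonneg f x : (forall w, (w < n)%nat -> 0 <= f w) -> 0 <= A f x.
Proof.
  intros H. unfold A, Aop. apply rsum_nonneg. intros w Hw.
  assert (Hinv := inv_INR_nonneg d).
  specialize (H w Hw). destruct (isE n adj x w); nra.
Qed.

Lemma Aop_sym : simple_graph n adj -> forall f g, inner n (A f) g = inner n f (A g).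
Proof.
  intros Hs f g. unfold inner, A, Aop.
  rewrite (rsum_ext _ _ (fun u => rsum n (fun w =>
      (if isE n adj u w then / INR d else 0) * f w * g u)))
    by (intros u _; rewrite <- rsum_mult_r; reflexivity).
  rewrite rsum_swap. apply rsum_ext. intros w _.
  rewrite <- rsum_mult_l. apply rsum_ext. intros u _. rewrite (isE_sym n adj u w Hs). ring.
Qed.

Hypothesis Hreg : regular n d adj.
Hypothesis Hd : (1 <= d)%nat.

Lemma Aop_one x : (x < n)%nat -> A (fun _ => 1) x = 1.
Proof.
  intros Hx. unfold A, Aop.
  rewrite (rsum_ext _ _ (fun w => / INR d * (if isE n adj x w then 1 else 0)))
    by (intros w _; destruct (isE n adj x w); ring).
  rewrite rsum_mult_l, (regular_degree n d adj x Hreg Hx). field.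
  apply not_0_INR. lia.
Qed.

Lemma Aop_one_le x : A (fun _ => 1) x <= 1.
Proof.
  destruct (Nat.lt_ge_cases x n).
  - rewrite Aop_one; auto; lra.
  - unfold A, Aop. rewrite (rsum_ext _ _ (fun _ => 0)).
    + rewrite rsum_zero; lra.
    + intros w Hw. unfold isE.
      replace (Nat.ltb x n) with false by (symmetry; apply Nat.ltb_ge; lia).
      simpl. ring.
Qed.

Lemma Aop_sub_const x f c : (x < n)%nat -> A (fun w => f w - c) x = A f x - c.
Proof.
  intros Hx. rewrite (Aop_ext _ (fun w => 1 * f w + (-c) * (fun _ => 1) w)) by (intros; ring).
  rewrite Aop_lin, Aop_one by auto. ring.
Qed.

End Operator.

Lemma rsum_first k f : (1 <= k)%nat -> rsum k f = f 0%nat + rsum (k - 1) (fun i => f (S i)).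
Proof.
  intros H. destruct k; [lia |]. rewrite rsum_Sl. replace (S k - 1)%nat with k by lia. auto.
Qed.

Section Spectral.
Context (n d : nat) (adj : nat -> nat -> bool) (lam : R) (mu : nat -> R) (vec : nat -> nat -> R).
Hypothesis Hs : simple_graph n adj.
Hypothesis Hreg : regular n d adj.
Hypothesis Hd : (1 <= d)%nat.
Hypothesis Hn : (1 <= n)%nat.
Hypothesis Horth : forall i j, (i < n)%nat -> (j < n)%nat ->
  inner n (vec i) (vec j) = if Nat.eqb i j then 1 else 0.
Hypothesis Heig : forall i u, (i < n)%nat -> (u < n)%nat ->
  Aop n d adj (vec i) u = mu i * vec i u.
Hypothesis Hmu : forall i, (1 <= i)%nat -> (i < n)%nat -> Rabs (mu i) < lam.
Hypothesis Hlam : lam < 1.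

Let A := Aop n d adj.
Let coef g j := inner n g (vec j).
Let one : nat -> R := fun _ => 1.

Lemma parseval g h : inner n g h = rsum n (fun j => coef g j * coef h j).
Proof.
  unfold coef, inner. symmetry.
  rewrite (rsum_ext _ _ (fun j => rsum n (fun u => rsum n (fun w =>
      g u * h w * (vec j u * vec j w)))))
    by (intros j _; rewrite rsum_mul_rsum; apply rsum_ext; intros u _;
        apply rsum_ext; intros w _; ring).
  rewrite rsum_swap. apply rsum_ext. intros u Hu.
  rewrite rsum_swap.
  rewrite (rsum_ext _ _ (fun w => if Nat.eqb u w then g u * h w else 0)).
  - rewrite rsum_delta; auto.
  - intros w Hw. rewrite rsum_mult_l, (orthonormal_complete n vec Horth u w Hu Hw).
    destruct (Nat.eqb u w); ring.
Qed.

Lemma parseval_first g h :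
  inner n g h = coef g 0%nat * coef h 0%nat + rsum (n - 1) (fun j => coef g (S j) * coef h (S j)).
Proof. rewrite parseval. apply rsum_first, Hn. Qed.

Lemma coef_Aop g j : (j < n)%nat -> coef (A g) j = mu j * coef g j.
Proof.
  intros Hj. unfold coef, A. rewrite Aop_sym by auto. unfold inner. rewrite <- rsum_mult_l.
  apply rsum_ext. intros u Hu. unfold A. rewrite Heig by auto. ring.
Qed.

Lemma coef_one_eigen j : (j < n)%nat -> mu j * coef one j = coef one j.
Proof.
  intros Hj. rewrite <- coef_Aop by auto. apply inner_ext; auto.
  intros; apply Aop_one; auto.
Qed.

(* The constant vector is an eigenvector for 1, and |mu j| < 1 for j >= 1. *)
Lemma coef_one_nontrivial j : (1 <= j)%nat -> (j < n)%nat -> coef one j = 0.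
Proof.
  intros H1 H2. assert (E := coef_one_eigen j H2). specialize (Hmu j H1 H2).
  assert (mu j < 1) by (apply Rle_lt_trans with (Rabs (mu j)); [apply Rle_abs | lra]).
  assert (Z : (mu j - 1) * coef one j = 0) by lra.
  apply Rmult_integral in Z. destruct Z; lra.
Qed.

Lemma inner_one_coef g : inner n g one = coef g 0%nat * coef one 0%nat.
Proof.
  rewrite parseval_first, (rsum_ext _ _ (fun _ => 0)), rsum_zero; [ring |].
  intros j Hj. rewrite coef_one_nontrivial by lia. ring.
Qed.

Lemma coef_one_sq : INR n = coef one 0%nat * coef one 0%nat.
Proof.
  rewrite <- inner_one_coef. unfold inner, one.
  rewrite (rsum_ext _ _ (fun _ => 1)) by (intros; ring). rewrite rsum_const. ring.
Qed.

Lemma coef_one_top_neq0 : coef one 0%nat <> 0.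
Proof.
  intro E. assert (H := coef_one_sq). rewrite E in H.
  assert (0 < INR n) by (apply lt_0_INR; lia). lra.
Qed.

Lemma mu_top : mu 0%nat = 1.
Proof.
  assert (E := coef_one_eigen 0%nat ltac:(lia)).
  assert (Z : (mu 0%nat - 1) * coef one 0%nat = 0) by lra.
  apply Rmult_integral in Z. destruct Z as [Z | Z]; [lra |].
  destruct coef_one_top_neq0; auto.
Qed.

Lemma tail_Aop_le g :
  rsum (n - 1) (fun j => coef (A g) (S j) * coef (A g) (S j)) <=
  lam^2 * rsum (n - 1) (fun j => coef g (S j) * coef g (S j)).
Proof.
  rewrite <- rsum_mult_l. apply rsum_le. intros j Hj.
  rewrite coef_Aop by lia.
  specialize (Hmu (S j) ltac:(lia) ltac:(lia)).
  assert (Hsq : Rabs (mu (S j)) * Rabs (mu (S j)) <= lam * lam)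
    by (assert (H := Rabs_pos (mu (S j))); nra).
  rewrite <- Rabs_mult, Rabs_right in Hsq by (apply Rle_ge, Rle_0_sqr).
  assert (0 <= coef g (S j) * coef g (S j)) by apply Rle_0_sqr.
  nra.
Qed.

(* The mean part of f is fixed by A, the orthogonal part is contracted by lam. *)
Lemma Aop_sqnorm_le f :
  inner n (A f) (A f) <= lam^2 * inner n f f + (1 - lam^2) * (inner n f one)^2 / INR n.
Proof.
  rewrite (parseval_first (A f)), (parseval_first f f), inner_one_coef, coef_Aop, mu_top by lia.
  assert (Htail := tail_Aop_le f).
  replace ((1 - lam^2) * (coef f 0%nat * coef one 0%nat)^2 / INR n)
    with ((1 - lam^2) * (coef f 0%nat * coef f 0%nat))
    by (rewrite coef_one_sq; field; apply coef_one_top_neq0).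
  nra.
Qed.

End Spectral.

Definition card_pred (k : nat) (U : nat -> bool) : nat := length (filter U (seq 0 k)).

Lemma card_pred_S k U : card_pred (S k) U = (card_pred k U + if U k then 1 else 0)%nat.
Proof.
  unfold card_pred. rewrite seq_S, filter_app, length_app. simpl. destruct (U k); reflexivity.
Qed.

Lemma card_pred_le k U : (card_pred k U <= k)%nat.
Proof. induction k; [unfold card_pred; simpl; lia |]. rewrite card_pred_S. destruct (U k); lia. Qed.

Lemma card_pred_mono k U V : (forall u, (u < k)%nat -> U u = true -> V u = true) ->
  (card_pred k U <= card_pred k V)%nat.
Proof.
  induction k; intros H; [unfold card_pred; simpl; lia |]. rewrite !card_pred_S.
  assert (card_pred k U <= card_pred k V)%nat by (apply IHk; intros; apply H; auto; lia).
  specialize (H k). destruct (U k), (V k); try lia;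
    discriminate (H ltac:(lia) eq_refl).
Qed.

Lemma card_pred_lt k U V a : (forall u, (u < k)%nat -> U u = true -> V u = true) ->
  (a < k)%nat -> U a = false -> V a = true -> (card_pred k U < card_pred k V)%nat.
Proof.
  induction k; intros H Ha HU HV; [lia |]. rewrite !card_pred_S.
  destruct (Nat.eq_dec a k).
  - subst. rewrite HU, HV.
    assert (card_pred k U <= card_pred k V)%nat by (apply card_pred_mono; intros; apply H; auto).
    lia.
  - assert (card_pred k U < card_pred k V)%nat
      by (apply IHk; auto; try lia; intros u Hu; apply H; lia).
    specialize (H k). destruct (U k), (V k); try lia;
      discriminate (H ltac:(lia) eq_refl).
Qed.

Lemma card_pred_pos k U a : (a < k)%nat -> U a = true -> (1 <= card_pred k U)%nat.
Proof.
  intros Ha HU. assert (card_pred k (fun _ => false) < card_pred k U)%nat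
    by (apply (card_pred_lt k _ _ a); auto).
  lia.
Qed.

Fixpoint Aiter (n d : nat) (adj : nat -> nat -> bool) (t : nat) (f : nat -> R) : nat -> R :=
  match t with O => f | S t' => Aop n d adj (Aiter n d adj t' f) end.

(* avoid U t x: probability that the simple random walk from x stays outside U at times 0..t *)
Fixpoint avoid (n d : nat) (adj : nat -> nat -> bool) (U : nat -> bool) (t : nat) : nat -> R :=
  match t with
  | O => fun x => if U x then 0 else 1
  | S t' => fun x => if U x then 0 else Aop n d adj (avoid n d adj U t') x
  end.

Definition mean (n : nat) (f : nat -> R) : R := inner n f (fun _ => 1) / INR n.

Definition decay_rate (n : nat) (lam : R) (k : nat) : R := 1 - (1 - lam^2) * INR k / INR n.

Lemma decay_rate_bounds n lam k : (1 <= n)%nat -> 0 <= lam < 1 -> (k <= n)%nat ->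
  0 <= decay_rate n lam k <= 1.
Proof.
  intros Hn [Hl0 Hl1] Hk. unfold decay_rate.
  assert (0 < INR n) by (apply lt_0_INR; lia).
  assert (INR k <= INR n) by (apply le_INR; auto).
  assert (0 <= INR k) by apply pos_INR.
  assert (0 <= 1 - lam^2 <= 1) by nra.
  assert (0 <= (1 - lam^2) * INR k / INR n <= 1); [| lra].
  split.
  - apply Rmult_le_pos; [apply Rmult_le_pos; lra | apply Rlt_le, Rinv_0_lt_compat; auto].
  - apply (Rmult_le_reg_r (INR n)); auto. unfold Rdiv. rewrite Rmult_assoc, Rinv_l by lra. nra.
Qed.

Section Escape.
Context (n d : nat) (adj : nat -> nat -> bool) (lam : R).
Hypothesis Hs : simple_graph n adj.
Hypothesis Hreg : regular n d adj.
Hypothesis Hd : (1 <= d)%nat.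
Hypothesis Hn : (1 <= n)%nat.
Hypothesis Hlam0 : 0 <= lam.
Hypothesis Hlam1 : lam < 1.
Hypothesis Hspec : forall f, inner n (Aop n d adj f) (Aop n d adj f) <=
  lam^2 * inner n f f + (1 - lam^2) * (inner n f (fun _ => 1))^2 / INR n.

Let A := Aop n d adj.
Let one : nat -> R := fun _ => 1.
Let sqnorm f := inner n f f.

Lemma n_pos : 0 < INR n.
Proof. apply lt_0_INR; lia. Qed.

Lemma sqnorm_nonneg f : 0 <= sqnorm f.
Proof. apply rsum_nonneg; intros; nra. Qed.

Lemma avoid_bounds U t x : 0 <= avoid n d adj U t x <= 1.
Proof.
  revert x. induction t; intros x; simpl; destruct (U x); try lra.
  split.
  - apply Aop_nonneg. intros; apply IHt.
  - apply Rle_trans with (A one x); [apply Aop_mono; intros; apply IHt | apply Aop_one_le; auto].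
Qed.

Lemma avoid_in U t x : U x = true -> avoid n d adj U t x = 0.
Proof. intros H. destruct t; simpl; rewrite H; auto. Qed.

(* avoid U t is supported on the complement of U, which has n - |U| points *)
Lemma avoid_inner_one_sq U t :
  (inner n (avoid n d adj U t) one)^2 <= (INR n - INR (card_pred n U)) * sqnorm (avoid n d adj U t).
Proof.
  set (g := avoid n d adj U t). set (chi := fun u => if U u then 0 else 1).
  assert (E : inner n g one = rsum n (fun u => g u * chi u)).
  { unfold inner. apply rsum_ext. intros u _. unfold g, chi, one.
    destruct (U u) eqn:HU; [rewrite avoid_in by auto |]; ring. }
  rewrite E. eapply Rle_trans; [apply cauchy_schwarz |].
  assert (Echi : rsum n (fun i => chi i ^ 2) = INR n - INR (card_pred n U)).
  { unfold card_pred. rewrite length_filter_seq, <- (Rmult_1_r (INR n)), <- rsum_const, <- rsum_sub.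
    apply rsum_ext. intros; unfold chi; destruct (U i); ring. }
  rewrite Echi. unfold sqnorm, inner.
  rewrite (rsum_ext n (fun u => g u * g u) (fun i => g i ^ 2)) by (intros; ring).
  lra.
Qed.

Lemma avoid_sqnorm_step U t :
  sqnorm (avoid n d adj U (S t)) <= decay_rate n lam (card_pred n U) * sqnorm (avoid n d adj U t).
Proof.
  set (g := avoid n d adj U t).
  assert (Hkill : sqnorm (avoid n d adj U (S t)) <= sqnorm (A g)).
  { unfold sqnorm, inner. apply rsum_le. intros u _. simpl. destruct (U u); fold A g; nra. }
  assert (Hg := Hspec g). fold A in Hg.
  assert (Hone := avoid_inner_one_sq U t). fold g in Hone.
  assert (Hn0 := n_pos). assert (0 <= sqnorm g) by apply sqnorm_nonneg.
  assert (0 <= 1 - lam^2) by nra.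
  assert (Hmul : (1 - lam ^ 2) * inner n g one ^ 2 / INR n <=
          (1 - lam ^ 2) * ((INR n - INR (card_pred n U)) * sqnorm g) / INR n).
  { unfold Rdiv. apply Rmult_le_compat_r; [apply Rlt_le, Rinv_0_lt_compat; auto |].
    apply Rmult_le_compat_l; auto. }
  unfold decay_rate.
  replace ((1 - lam ^ 2) * ((INR n - INR (card_pred n U)) * sqnorm g) / INR n)
    with ((1 - (1 - lam ^ 2) * INR (card_pred n U) / INR n) * sqnorm g - lam^2 * sqnorm g)
    in Hmul by (field; lra).
  unfold sqnorm, one in *. lra.
Qed.

Lemma avoid_sqnorm_le U s :
  sqnorm (avoid n d adj U s) <= decay_rate n lam (card_pred n U) ^ s * INR n.
Proof.
  assert (Hr := decay_rate_bounds n lam (card_pred n U) Hn (conj Hlam0 Hlam1) (card_pred_le n U)).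
  induction s.
  - rewrite pow_O, Rmult_1_l. unfold sqnorm, inner.
    rewrite <- (Rmult_1_r (INR n)), <- rsum_const. apply rsum_le. intros u _.
    destruct (avoid_bounds U 0 u). nra.
  - eapply Rle_trans; [apply avoid_sqnorm_step |]. simpl.
    rewrite Rmult_assoc. apply Rmult_le_compat_l; [lra | auto].
Qed.

Lemma Aiter_nonneg f t x : (forall w, (w < n)%nat -> 0 <= f w) -> (x < n)%nat ->
  0 <= Aiter n d adj t f x.
Proof.
  intros Hf Hx. destruct t; simpl; auto.
  apply Aop_nonneg. intros w Hw. revert w Hw. induction t; intros w Hw; simpl; auto.
  apply Aop_nonneg. auto.
Qed.

Lemma avoid_le_Aiter U s j x : (x < n)%nat ->
  avoid n d adj U (s + j) x <= Aiter n d adj j (avoid n d adj U s) x.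
Proof.
  revert x. induction j; intros x Hx.
  - rewrite Nat.add_0_r. simpl. lra.
  - rewrite Nat.add_succ_r. simpl. destruct (U x).
    + apply Aiter_nonneg with (t := S j); auto. intros; apply avoid_bounds.
    + apply Aop_mono. intros w Hw. apply IHj; auto.
Qed.

Lemma Aop_centered f : inner n f one = 0 -> inner n (A f) one = 0.
Proof.
  intros H. unfold A. rewrite Aop_sym by auto. rewrite <- H.
  apply inner_ext; auto. intros; apply Aop_one; auto.
Qed.

Lemma Aiter_centered_sqnorm f t : inner n f one = 0 ->
  sqnorm (Aiter n d adj t f) <= (lam^2)^t * sqnorm f.
Proof.
  intros H0.
  assert (Hc : forall t, inner n (Aiter n d adj t f) one = 0)
    by (induction t0; [auto | apply Aop_centered; auto]).
  induction t; [simpl; lra |].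
  eapply Rle_trans; [apply Hspec |]. fold one. rewrite Hc.
  replace ((1 - lam ^ 2) * 0 ^ 2 / INR n) with 0 by (assert (H := n_pos); field; lra).
  change ((lam^2)^(S t)) with (lam^2 * (lam^2)^t).
  rewrite Rplus_0_r, Rmult_assoc. apply Rmult_le_compat_l; [nra | exact IHt].
Qed.

Lemma Aiter_sub_const f c t x : (x < n)%nat ->
  Aiter n d adj t (fun w => f w - c) x = Aiter n d adj t f x - c.
Proof.
  intros Hx. revert x Hx. induction t; intros x Hx; simpl; auto.
  rewrite <- Aop_sub_const by auto. apply Aop_ext. auto.
Qed.

Lemma centered_sqnorm f :
  inner n (fun u => f u - mean n f) one = 0 /\ sqnorm (fun u => f u - mean n f) <= sqnorm f.
Proof.
  assert (Hn0 := n_pos). set (c := mean n f).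
  assert (Hc : inner n f one = c * INR n) by (unfold c, mean, one; field; lra).
  unfold sqnorm, inner, one in *. split.
  - rewrite (rsum_ext _ _ (fun u => f u * 1 - c)) by (intros; ring).
    rewrite rsum_sub, rsum_const, Hc. ring.
  - rewrite (rsum_ext _ _ (fun u => f u * f u - (2 * c) * (f u * 1) + c * c)) by (intros; ring).
    rewrite rsum_add, rsum_sub, rsum_mult_l, rsum_const, Hc. nra.
Qed.

Lemma Aiter_mixing f t x : (x < n)%nat ->
  (Aiter n d adj t f x - mean n f)^2 <= (lam^2)^t * sqnorm f.
Proof.
  intros Hx. set (D := fun u => f u - mean n f).
  destruct (centered_sqnorm f) as [HD1 HD2]. fold D in HD1, HD2.
  assert (Hpt : (Aiter n d adj t D x)^2 <= sqnorm (Aiter n d adj t D)).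
  { unfold sqnorm, inner. replace ((Aiter n d adj t D x)^2) with
      (Aiter n d adj t D x * Aiter n d adj t D x) by ring.
    apply (rsum_term_le n (fun u => Aiter n d adj t D u * Aiter n d adj t D u)); auto.
    intros; nra. }
  replace (Aiter n d adj t D x) with (Aiter n d adj t f x - mean n f) in Hpt
    by (symmetry; apply Aiter_sub_const; auto).
  assert (Ht := Aiter_centered_sqnorm D t HD1).
  assert (0 <= (lam^2)^t) by (apply pow_le; nra).
  assert ((lam^2)^t * sqnorm D <= (lam^2)^t * sqnorm f) by (apply Rmult_le_compat_l; auto).
  lra.
Qed.

Lemma mean_sq_le f : (mean n f)^2 <= sqnorm f / INR n.
Proof.
  assert (Hn0 := n_pos). assert (H := inner_one_sq_le n f).
  unfold mean. replace ((inner n f (fun _ => 1) / INR n)^2)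
    with ((inner n f (fun _ => 1))^2 / INR n / INR n) by (field; lra).
  unfold Rdiv. apply Rmult_le_compat_r; [apply Rlt_le, Rinv_0_lt_compat; auto |].
  apply (Rmult_le_reg_r (INR n)); auto. rewrite Rmult_assoc, Rinv_l by lra.
  unfold sqnorm. lra.
Qed.

(* Once the L2 mass of the killed walk is at most n/16, mixing for t0 more steps
   brings every value within 1/4 of a mean that is itself at most 1/4. *)
Lemma avoid_le_half U s t0 x : (x < n)%nat ->
  decay_rate n lam (card_pred n U) ^ s <= 1/16 ->
  (lam^2)^t0 * INR n <= 1/16 ->
  avoid n d adj U (s + t0) x <= 1/2.
Proof.
  intros Hx Hs16 Ht16. assert (Hn0 := n_pos).
  set (f := avoid n d adj U s).
  assert (Hf : sqnorm f <= INR n / 16).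
  { eapply Rle_trans; [apply avoid_sqnorm_le |].
    apply Rle_trans with (1/16 * INR n); [apply Rmult_le_compat_r |]; lra. }
  assert (Hmean : (mean n f)^2 <= 1/16).
  { eapply Rle_trans; [apply mean_sq_le |]. apply (Rmult_le_reg_r (INR n)); auto.
    unfold Rdiv. rewrite Rmult_assoc, Rinv_l by lra. lra. }
  assert (Hmix := Aiter_mixing f t0 x Hx).
  assert (0 <= (lam^2)^t0) by (apply pow_le; nra).
  assert (Hmix16 : (Aiter n d adj t0 f x - mean n f)^2 <= 1/16).
  { eapply Rle_trans; [apply Hmix |]. assert (0 <= sqnorm f) by apply sqnorm_nonneg. nra. }
  assert (Hsqrt : forall y, y^2 <= 1/16 -> y <= 1/4)
    by (intros y Hy; destruct (Rle_lt_dec y (1/4)); auto; nra).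
  assert (Hle := avoid_le_Aiter U s t0 x Hx). fold f in Hle.
  apply Hsqrt in Hmean. apply Hsqrt in Hmix16. lra.
Qed.

End Escape.

Lemma steps_app a h w : steps ((a :: h) ++ [w]) = steps (a :: h) ++ [(last (a :: h) 0%nat, w)].
Proof.
  revert a. induction h as [|b h IH]; intros a; simpl; auto.
  f_equal. specialize (IH b). simpl in IH. rewrite IH. destruct h; reflexivity.
Qed.

Lemma traversed_app h w u v : h <> [] ->
  traversed (h ++ [w]) u v = traversed h u v || same_edge (cur h, w) u v.
Proof.
  intros Hh. destruct h as [|a h]; [congruence |].
  unfold traversed. rewrite steps_app, existsb_app. simpl. unfold cur.
  rewrite orb_false_r. reflexivity.
Qed.

Lemma cur_app h w : cur (h ++ [w]) = w.
Proof. unfold cur. apply last_last. Qed.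

Lemma traversed_sym h u v : traversed h u v = traversed h v u.
Proof.
  unfold traversed. induction (steps h) as [|e l IH]; simpl; auto.
  rewrite IH. unfold same_edge. rewrite (orb_comm (_ && _)). reflexivity.
Qed.

Lemma traversed_last h w : h <> [] -> traversed (h ++ [w]) (cur h) w = true.
Proof.
  intros Hh. rewrite traversed_app by auto. unfold same_edge. simpl.
  rewrite !Nat.eqb_refl, orb_true_r. reflexivity.
Qed.

Lemma app_nonnil (h ws : list nat) : h <> [] -> h ++ ws <> [].
Proof. intros H E. apply app_eq_nil in E. tauto. Qed.

Lemma traversed_app_mono h ws u v : h <> [] ->
  traversed h u v = true -> traversed (h ++ ws) u v = true.
Proof.
  revert h. induction ws as [|w ws IH]; intros h Hh Ht.
  - rewrite app_nil_r. auto.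
  - replace (h ++ w :: ws) with ((h ++ [w]) ++ ws) by (rewrite <- app_assoc; reflexivity).
    apply IH; [apply app_nonnil; auto |]. rewrite traversed_app, Ht by auto. reflexivity.
Qed.

Lemma coveredP n adj p :
  covered n adj p = true <-> (forall u v, isE n adj u v = true -> traversed p u v = true).
Proof.
  unfold covered. rewrite forallb_forall. split.
  - intros H u v Huv. destruct (isE_inv _ _ _ _ Huv) as [Hu [Hv _]].
    specialize (H u ltac:(apply in_seq; lia)). rewrite forallb_forall in H.
    specialize (H v ltac:(apply in_seq; lia)). rewrite Huv in H. exact H.
  - intros H u _. rewrite forallb_forall. intros v _.
    destruct (isE n adj u v) eqn:E; simpl; auto.
Qed.

Lemma not_covered_edge n adj p : covered n adj p = false ->
  exists u v, isE n adj u v = true /\ traversed p u v = false.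
Proof.
  intros Hc. apply NNPP. intros Hne.
  assert (covered n adj p = true); [| congruence].
  apply coveredP. intros u v Huv. destruct (traversed p u v) eqn:E; auto.
  exfalso. apply Hne. exists u, v. auto.
Qed.

Lemma covered_app n adj h ws : h <> [] ->
  covered n adj h = true -> covered n adj (h ++ ws) = true.
Proof. intros Hh. rewrite !coveredP. intros H u v Huv. apply traversed_app_mono; auto. Qed.

Lemma lsum_app l1 l2 : lsum (l1 ++ l2) = lsum l1 + lsum l2.
Proof. induction l1; simpl; [lra | rewrite IHl1; lra]. Qed.

Lemma lsum_seq (F : nat -> R) k : lsum (map F (seq 0 k)) = rsum k F.
Proof. induction k; auto. rewrite seq_S, map_app, lsum_app, IHk. simpl. lra. Qed.

Lemma lsum_flat_map {A B : Type} (f : B -> R) (g : A -> list B) (l : list A) :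
  lsum (map f (flat_map g l)) = lsum (map (fun a => lsum (map f (g a))) l).
Proof. induction l; simpl; auto. rewrite map_app, lsum_app, IHl. reflexivity. Qed.

Lemma lsum_map_mult_l {A : Type} (c : R) (f : A -> R) l :
  lsum (map (fun x => c * f x) l) = c * lsum (map f l).
Proof. induction l; simpl; [lra | rewrite IHl; lra]. Qed.

Lemma lsum_map_sub {A : Type} (f g : A -> R) l :
  lsum (map (fun x => f x - g x) l) = lsum (map f l) - lsum (map g l).
Proof. induction l; simpl; [lra | rewrite IHl; lra]. Qed.

Lemma lsum_all_seqs_S n t (f : list nat -> R) :
  lsum (map f (all_seqs n (S t))) =
  rsum n (fun w => lsum (map (fun ws => f (w :: ws)) (all_seqs n t))).
Proof.
  simpl. rewrite lsum_flat_map, <- lsum_seq. f_equal. apply map_ext. intros w.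
  rewrite map_map. reflexivity.
Qed.

Lemma all_seqs_nonnil n t ws : In ws (all_seqs n (S t)) -> ws <> [].
Proof.
  simpl. intros H. apply in_flat_map in H as [w [_ Hw]]. apply in_map_iff in Hw as [ws' [E _]].
  subst. discriminate.
Qed.

Lemma telescope (N : nat -> R) T :
  rsum T (fun t => INR (S t) * (N t - N (S t))) = rsum T N - INR T * N T.
Proof. induction T; [simpl; ring |]. cbn [rsum]. rewrite IHT, S_INR. ring. Qed.

Section Walk.
Context (n d : nat) (adj : nat -> nat -> bool) (Rl : rule).
Hypothesis Hreg : regular n d adj.
Hypothesis Hd : (1 <= d)%nat.
Hypothesis Hval : valid_rule n adj Rl.

Let P := pprob n d adj Rl.
Let tr := trans n d adj Rl.

Lemma trans_nonneg h w : 0 <= tr h w.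
Proof.
  unfold tr, trans. destruct (has_unused n adj h) eqn:E.
  - apply (Hval h E).
  - destruct (isE n adj (cur h) w); [apply inv_INR_nonneg | lra].
Qed.

Lemma trans_sum h : (cur h < n)%nat -> rsum n (tr h) = 1.
Proof.
  intros Hx. unfold tr, trans. destruct (has_unused n adj h) eqn:E.
  - apply (Hval h E).
  - rewrite <- (Aop_one n d adj Hreg Hd (cur h) Hx). apply rsum_ext. intros; ring.
Qed.

Definition uncov_prob t h := lsum (map (fun ws =>
  P h ws * (if covered n adj (h ++ ws) then 0 else 1)) (all_seqs n t)).
Definition mass t h := lsum (map (fun ws => P h ws) (all_seqs n t)).
Definition cover_last_prob t h := lsum (map (fun ws => P h ws *
  (if covered n adj (h ++ ws) && negb (covered n adj (removelast (h ++ ws))) then 1 else 0))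
  (all_seqs n t)).

Lemma lsum_pprob_S t h (F : list nat -> R) :
  lsum (map (fun ws => P h ws * F (h ++ ws)) (all_seqs n (S t))) =
  rsum n (fun w => tr h w * lsum (map (fun ws => P (h ++ [w]) ws * F ((h ++ [w]) ++ ws))
                                       (all_seqs n t))).
Proof.
  rewrite lsum_all_seqs_S. apply rsum_ext. intros w _.
  rewrite <- lsum_map_mult_l. f_equal. apply map_ext. intros ws.
  replace (h ++ w :: ws) with ((h ++ [w]) ++ ws) by (rewrite <- app_assoc; reflexivity).
  unfold P. simpl. fold tr. ring.
Qed.

Lemma uncov_prob_S t h : uncov_prob (S t) h = rsum n (fun w => tr h w * uncov_prob t (h ++ [w])).
Proof. apply (lsum_pprob_S t h (fun p => if covered n adj p then 0 else 1)). Qed.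

Lemma mass_S t h : mass (S t) h = rsum n (fun w => tr h w * mass t (h ++ [w])).
Proof.
  assert (E := lsum_pprob_S t h (fun _ => 1)).
  unfold mass. rewrite (map_ext (fun ws => P h ws) (fun ws => P h ws * 1)) by (intros; ring).
  rewrite E. apply rsum_ext. intros w _. do 2 f_equal. apply map_ext. intros; ring.
Qed.

Lemma cover_last_prob_S t h :
  cover_last_prob (S t) h = rsum n (fun w => tr h w * cover_last_prob t (h ++ [w])).
Proof.
  apply (lsum_pprob_S t h
    (fun p => if covered n adj p && negb (covered n adj (removelast p)) then 1 else 0)).
Qed.

Lemma uncov_prob_0 h : uncov_prob 0 h = if covered n adj h then 0 else 1.
Proof.
  unfold uncov_prob, P. simpl. rewrite app_nil_r. destruct (covered n adj h); ring.
Qed.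

Lemma cover_last_prob_0 h :
  cover_last_prob 0 h = if covered n adj h && negb (covered n adj (removelast h)) then 1 else 0.
Proof. unfold cover_last_prob, P. simpl. rewrite app_nil_r. destruct (_ && _); ring. Qed.

Lemma mass_one t h : (cur h < n)%nat -> mass t h = 1.
Proof.
  revert h. induction t; intros h Hh.
  - unfold mass, P. simpl. ring.
  - rewrite mass_S, <- (trans_sum h Hh). apply rsum_ext. intros w Hw.
    rewrite IHt; [ring |]. rewrite cur_app. auto.
Qed.

Lemma uncov_prob_nonneg t h : 0 <= uncov_prob t h.
Proof.
  revert h. induction t; intros h.
  - rewrite uncov_prob_0. destruct (covered n adj h); lra.
  - rewrite uncov_prob_S. apply rsum_nonneg. intros.
    apply Rmult_le_pos; auto. apply trans_nonneg.
Qed.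

Lemma uncov_prob_covered t h : h <> [] -> covered n adj h = true -> uncov_prob t h = 0.
Proof.
  revert h. induction t; intros h Hh Hc.
  - rewrite uncov_prob_0, Hc. reflexivity.
  - rewrite uncov_prob_S, (rsum_ext _ _ (fun _ => 0)); [apply rsum_zero |].
    intros w _. rewrite IHt; [ring | apply app_nonnil; auto | apply covered_app; auto].
Qed.

Lemma cover_last_prob_covered t h : h <> [] -> covered n adj h = true ->
  cover_last_prob (S t) h = 0.
Proof.
  revert h. induction t; intros h Hh Hc;
    rewrite cover_last_prob_S, (rsum_ext _ _ (fun _ => 0)); try apply rsum_zero.
  - intros w _. rewrite cover_last_prob_0, removelast_last, Hc, andb_false_r. ring.
  - intros w _. rewrite IHt; [ring | apply app_nonnil; auto | apply covered_app; auto].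
Qed.

Lemma uncov_prob_S_le t h : h <> [] -> (cur h < n)%nat ->
  uncov_prob (S t) h <= uncov_prob t h.
Proof.
  revert h. induction t; intros h Hh Hx.
  - rewrite uncov_prob_S, uncov_prob_0. destruct (covered n adj h) eqn:Hc.
    + rewrite (rsum_ext _ _ (fun _ => 0)); [rewrite rsum_zero; lra |].
      intros w _. rewrite uncov_prob_0, covered_app by auto. ring.
    + rewrite <- (trans_sum h Hx). apply rsum_le. intros w _.
      rewrite uncov_prob_0. assert (0 <= tr h w) by apply trans_nonneg.
      destruct (covered n adj (h ++ [w])); lra.
  - rewrite (uncov_prob_S (S t)), (uncov_prob_S t). apply rsum_le. intros w Hw.
    apply Rmult_le_compat_l; [apply trans_nonneg |].
    apply IHt; [apply app_nonnil; auto | rewrite cur_app; auto].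
Qed.

Lemma uncov_prob_antimono h t T : h <> [] -> (cur h < n)%nat -> (t <= T)%nat ->
  uncov_prob T h <= uncov_prob t h.
Proof.
  intros Hh Hx Hle. induction Hle; [lra |].
  eapply Rle_trans; [apply uncov_prob_S_le; auto | auto].
Qed.

Lemma cover_last_prob_le t h : h <> [] -> (cur h < n)%nat ->
  cover_last_prob (S t) h <= uncov_prob t h - uncov_prob (S t) h.
Proof.
  revert h. induction t; intros h Hh Hx.
  - destruct (covered n adj h) eqn:Hc.
    + rewrite cover_last_prob_covered, !uncov_prob_covered by auto. lra.
    + rewrite cover_last_prob_S, uncov_prob_S, uncov_prob_0, Hc, <- (trans_sum h Hx),
        <- rsum_sub.
      apply rsum_le. intros w _.
      rewrite cover_last_prob_0, uncov_prob_0, removelast_last, Hc. simpl.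
      destruct (covered n adj (h ++ [w])); simpl; lra.
  - rewrite (cover_last_prob_S (S t)), (uncov_prob_S (S t)), (uncov_prob_S t), <- rsum_sub.
    apply rsum_le. intros w Hw.
    rewrite <- Rmult_minus_distr_l. apply Rmult_le_compat_l; [apply trans_nonneg |].
    apply IHt; [apply app_nonnil; auto | rewrite cur_app; auto].
Qed.

Lemma prob_cover_le_mass v0 T :
  prob_cover_le n d adj Rl v0 T = mass T [v0] - uncov_prob T [v0].
Proof.
  unfold prob_cover_le, mass, uncov_prob. rewrite <- lsum_map_sub.
  f_equal. apply map_ext. intros ws. simpl. destruct (covered n adj (v0 :: ws)); unfold P; ring.
Qed.

Lemma prob_cover_eq_last v0 t :
  prob_cover_eq n d adj Rl v0 (S t) = cover_last_prob (S t) [v0].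
Proof.
  unfold prob_cover_eq, cover_last_prob. f_equal. apply map_ext_in. intros ws Hws.
  destruct ws as [|w ws]; [exfalso; apply (all_seqs_nonnil n t [] Hws); auto |].
  reflexivity.
Qed.

Lemma expected_cover_le_covered v0 B : covered n adj [v0] = true -> 0 <= B ->
  expected_cover_le n d adj Rl v0 B.
Proof.
  intros Hc HB. split.
  - intros eps Heps. exists 0%nat. unfold prob_cover_le. simpl. rewrite Hc. lra.
  - intros T. rewrite rsum_Sl, (rsum_ext _ _ (fun _ => 0)).
    + rewrite rsum_zero. simpl. lra.
    + intros t _. rewrite prob_cover_eq_last, cover_last_prob_covered by (auto; discriminate).
      ring.
Qed.

Section Potential.
Context (Phi : list nat -> R).
Hypothesis Phi_nonneg : forall h, 0 <= Phi h.
Hypothesis Phi_drift : forall h, h <> [] -> (cur h < n)%nat -> covered n adj h = false ->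
  1 + rsum n (fun w => tr h w * Phi (h ++ [w])) <= Phi h.

(* sum_(t < T) P(C_E > t) = E[min(C_E, T)]: by induction on T, each step is paid for
   by the drift of Phi. *)
Lemma uncov_prob_sum_le T h : h <> [] -> (cur h < n)%nat ->
  rsum T (fun t => uncov_prob t h) <= Phi h.
Proof.
  revert h. induction T; intros h Hh Hx; [simpl; apply Phi_nonneg |].
  destruct (covered n adj h) eqn:Hc.
  - rewrite (rsum_ext _ _ (fun _ => 0)) by (intros; apply uncov_prob_covered; auto).
    rewrite rsum_zero. apply Phi_nonneg.
  - rewrite rsum_Sl, uncov_prob_0, Hc.
    rewrite (rsum_ext _ _ (fun t => rsum n (fun w => tr h w * uncov_prob t (h ++ [w]))))
      by (intros; apply uncov_prob_S).
    rewrite <- rsum_swap.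
    eapply Rle_trans; [| apply Phi_drift; auto].
    apply Rplus_le_compat_l, rsum_le. intros w Hw.
    rewrite rsum_mult_l. apply Rmult_le_compat_l; [apply trans_nonneg |].
    apply IHT; [apply app_nonnil; auto | rewrite cur_app; auto].
Qed.

Lemma uncov_prob_tail_le v0 T : (v0 < n)%nat -> INR T * uncov_prob T [v0] <= Phi [v0].
Proof.
  intros Hv. eapply Rle_trans; [| apply (uncov_prob_sum_le T); [discriminate | auto]].
  rewrite <- rsum_const. apply rsum_le. intros t Ht.
  apply uncov_prob_antimono; [discriminate | auto | lia].
Qed.

Lemma cover_finite_of_potential v0 : (v0 < n)%nat ->
  forall eps, 0 < eps -> exists T, 1 - eps <= prob_cover_le n d adj Rl v0 T.
Proof.
  intros Hv eps Heps.
  destruct (INR_archimed eps (Phi [v0]) Heps) as [T HT]. exists T.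
  rewrite prob_cover_le_mass, mass_one by auto.
  assert (HT0 : 0 < INR T).
  { destruct T; [simpl in HT; specialize (Phi_nonneg [v0]); lra | apply lt_0_INR; lia]. }
  assert (Htail := uncov_prob_tail_le v0 T Hv).
  assert (uncov_prob T [v0] < eps) by (apply Rmult_lt_reg_l with (INR T); lra).
  lra.
Qed.

Lemma expected_cover_le_of_potential v0 B : (v0 < n)%nat -> Phi [v0] <= B ->
  expected_cover_le n d adj Rl v0 B.
Proof.
  intros Hv HB. split; [apply cover_finite_of_potential; auto |].
  intros T. rewrite rsum_Sl. simpl (INR 0). rewrite Rmult_0_l, Rplus_0_l.
  apply Rle_trans with (rsum T (fun t => INR (S t) * (uncov_prob t [v0] - uncov_prob (S t) [v0]))).
  - apply rsum_le. intros t _. rewrite prob_cover_eq_last.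
    apply Rmult_le_compat_l; [apply pos_INR |]. apply cover_last_prob_le; [discriminate | auto].
  - rewrite telescope.
    assert (Hsum := uncov_prob_sum_le T [v0] ltac:(discriminate) Hv).
    assert (0 <= INR T * uncov_prob T [v0])
      by (apply Rmult_le_pos; [apply pos_INR | apply uncov_prob_nonneg]).
    lra.
Qed.

End Potential.

End Walk.

Definition ceil_nat (r : R) : nat := Z.to_nat (up r).

Lemma ceil_nat_spec r : 0 <= r -> r <= INR (ceil_nat r) <= r + 1.
Proof.
  intros Hr. destruct (archimed r) as [H1 H2].
  assert (Hz : (0 <= up r)%Z) by (apply le_IZR; simpl; lra).
  unfold ceil_nat. rewrite INR_IZR_INZ, Z2Nat.id by auto. lra.
Qed.

Lemma bernoulli_pow a t : 0 <= a <= 1 -> (1 - a)^t * (1 + INR t * a) <= 1.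
Proof.
  intros Ha. induction t; [simpl; lra |].
  rewrite S_INR. simpl.
  assert (0 <= (1 - a)^t) by (apply pow_le; lra).
  assert (0 <= INR t) by apply pos_INR.
  assert ((1 - a) * (1 + (INR t + 1) * a) <= 1 + INR t * a) by nra.
  assert ((1 - a) ^ t * ((1 - a) * (1 + (INR t + 1) * a)) <= (1 - a)^t * (1 + INR t * a))
    by (apply Rmult_le_compat_l; auto).
  nra.
Qed.

Lemma pow_le_of_mul_ge a t c : 0 <= a <= 1 -> c <= INR t * a -> (1 - a)^t * (1 + c) <= 1.
Proof.
  intros Ha Hc. assert (H := bernoulli_pow a t Ha).
  assert (0 <= (1 - a)^t) by (apply pow_le; lra). nra.
Qed.

Lemma ln_le x y : 0 < x -> x <= y -> ln x <= ln y.
Proof.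
  intros Hx Hxy. destruct (Req_dec x y); [subst; lra |].
  apply Rlt_le, ln_increasing; lra.
Qed.

Lemma ln_le_sub_1 y : 0 < y -> ln y <= y - 1.
Proof. intros Hy. assert (H := exp_ineq1_le (ln y)). rewrite exp_ln in H; lra. Qed.

Lemma harmonic_le N : (1 <= N)%nat -> rsum N (fun j => / INR (S j)) <= 1 + ln (INR N).
Proof.
  intros HN. induction HN; [simpl; rewrite ln_1; lra |].
  cbn [rsum].
  assert (Hm : 0 < INR m) by (apply lt_0_INR; lia).
  assert (/ INR (S m) <= ln (INR (S m)) - ln (INR m)); [| lra].
  rewrite S_INR.
  assert (E : ln (INR m + 1) - ln (INR m) = - ln (INR m / (INR m + 1))).
  { unfold Rdiv. rewrite ln_mult, ln_Rinv by (try apply Rinv_0_lt_compat; lra). ring. }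
  rewrite E. assert (H := ln_le_sub_1 (INR m / (INR m + 1)) ltac:(apply Rdiv_lt_0_compat; lra)).
  replace (INR m / (INR m + 1) - 1) with (- / (INR m + 1)) in H by (field; lra).
  lra.
Qed.

Lemma ln_pow_2 k : ln (2 ^ k) = INR k * ln 2.
Proof. apply ln_pow. lra. Qed.

Lemma ln4_pos : 0 < ln 4.
Proof.
  replace 4 with (2 ^ 2) by (simpl; lra). rewrite ln_pow_2.
  pose proof ln_lt_2. simpl INR. lra.
Qed.

(* After escape_time steps the walk killed on a set of size k has L2 mass <= n/16;
   mixing_time more steps bring it below 1/2 at every vertex (avoid_le_half). *)
Definition halving_time (lam : R) : nat := ceil_nat (1 / (1 - lam)).
Definition log4_time (n : nat) : nat := ceil_nat (ln (16 * INR n) / ln 4).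
Definition mixing_time (n : nat) (lam : R) : nat := (halving_time lam * log4_time n)%nat.
Definition escape_time (n : nat) (lam : R) (k : nat) : nat :=
  ceil_nat (15 * INR n / ((1 - lam) * INR k)).
Definition hit_time (n : nat) (lam : R) (k : nat) : nat :=
  match k with O => O | S _ => (escape_time n lam k + mixing_time n lam)%nat end.
Definition hit_budget (n : nat) (lam : R) (k : nat) : R :=
  rsum k (fun j => 2 * INR (hit_time n lam j)).

Lemma hit_budget_S n lam k :
  hit_budget n lam (S k) = hit_budget n lam k + 2 * INR (hit_time n lam k).
Proof. reflexivity. Qed.

Lemma hit_budget_mono n lam k k' : (k <= k')%nat -> hit_budget n lam k <= hit_budget n lam k'.
Proof.
  intros H. induction H; [lra |]. rewrite hit_budget_S.
  assert (0 <= INR (hit_time n lam m)) by apply pos_INR. lra.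
Qed.

Lemma hit_budget_nonneg n lam k : 0 <= hit_budget n lam k.
Proof. apply (hit_budget_mono n lam 0). lia. Qed.

Section Budget.
Context (n : nat) (lam : R).
Hypothesis Hn2 : (2 <= n)%nat.
Hypothesis Hl0 : 0 <= lam.
Hypothesis Hl1 : lam < 1.

Let ia := / (1 - lam).
Let L := ln (INR n).

Lemma INR_n_ge_2 : 2 <= INR n.
Proof. replace 2 with (INR 2) by (simpl; lra). apply le_INR; auto. Qed.

Lemma ln_n_gt_half : / 2 < L.
Proof.
  assert (H := ln_lt_2). assert (ln 2 <= L) by (apply ln_le; pose proof INR_n_ge_2; lra).
  lra.
Qed.

Lemma inv_gap_ge_1 : 1 <= ia.
Proof. unfold ia. replace 1 with (/ 1) by apply Rinv_1. apply Rinv_le_contravar; lra. Qed.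

Lemma log4_time_ceil : ln (16 * INR n) / ln 4 <= INR (log4_time n) <= ln (16 * INR n) / ln 4 + 1.
Proof.
  assert (Hn := INR_n_ge_2). assert (H4 := ln4_pos).
  apply ceil_nat_spec, Rmult_le_pos; [| apply Rlt_le, Rinv_0_lt_compat; auto].
  rewrite <- ln_1. apply ln_le; lra.
Qed.

Lemma pow4_log4_time_ge : 16 * INR n <= 4 ^ log4_time n.
Proof.
  assert (Hn := INR_n_ge_2). assert (H4 := ln4_pos). destruct log4_time_ceil as [Hc _].
  destruct (Rle_lt_dec (16 * INR n) (4 ^ log4_time n)) as [Hle | Hlt]; auto. exfalso.
  assert (Hln : ln (4 ^ log4_time n) < ln (16 * INR n))
    by (apply ln_increasing; auto; apply pow_lt; lra).
  rewrite ln_pow in Hln by lra.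
  assert (Hmul : ln (16 * INR n) / ln 4 * ln 4 <= INR (log4_time n) * ln 4)
    by (apply Rmult_le_compat_r; lra).
  replace (ln (16 * INR n) / ln 4 * ln 4) with (ln (16 * INR n)) in Hmul by (field; lra).
  lra.
Qed.

Lemma log4_time_le : INR (log4_time n) <= 3 + L.
Proof.
  assert (Hn := INR_n_ge_2). assert (Hl2 := ln_lt_2). destruct log4_time_ceil as [_ Hc].
  assert (Hln4 : ln 4 = 2 * ln 2)
    by (replace 4 with (2 ^ 2) by (simpl; lra); rewrite ln_pow_2; simpl INR; ring).
  assert (Hln16 : ln 16 = 4 * ln 2)
    by (replace 16 with (2 ^ 4) by (simpl; lra); rewrite ln_pow_2; simpl INR; ring).
  rewrite ln_mult, Hln16, Hln4 in Hc by lra. fold L in Hc.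
  replace ((4 * ln 2 + L) / (2 * ln 2)) with (2 + L / (2 * ln 2)) in Hc by (field; lra).
  assert (L / (2 * ln 2) <= L); [| lra].
  assert (0 <= L) by (unfold L; rewrite <- ln_1; apply ln_le; lra).
  apply (Rmult_le_reg_r (2 * ln 2)); [lra |]. unfold Rdiv.
  rewrite Rmult_assoc, Rinv_l by lra. nra.
Qed.

Lemma halving_time_spec : lam ^ halving_time lam <= 1/2 /\ INR (halving_time lam) <= ia + 1.
Proof.
  assert (Hr : 0 <= 1 / (1 - lam)) by (apply Rlt_le, Rdiv_lt_0_compat; lra).
  destruct (ceil_nat_spec _ Hr) as [Hc1 Hc2]. fold (halving_time lam) in Hc1, Hc2.
  split; [| unfold ia; unfold Rdiv in Hc2; lra].
  assert (H := pow_le_of_mul_ge (1 - lam) (halving_time lam) 1 ltac:(lra)).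
  replace (1 - (1 - lam)) with lam in H by ring.
  apply (Rmult_le_reg_r 2); [lra |]. replace (1 / 2 * 2) with 1 by field. apply H.
  apply Rle_trans with (1 / (1 - lam) * (1 - lam)); [right; field; lra |].
  apply Rmult_le_compat_r; lra.
Qed.

Lemma mixing_time_spec : (lam ^ 2) ^ mixing_time n lam * INR n <= 1 / 16.
Proof.
  destruct halving_time_spec as [Hhalf _]. assert (H4 := pow4_log4_time_ge).
  assert (Hn := INR_n_ge_2).
  unfold mixing_time.
  replace ((lam ^ 2) ^ (halving_time lam * log4_time n))
    with ((lam ^ (halving_time lam * 2)) ^ log4_time n) by (rewrite <- !pow_mult; f_equal; lia).
  assert (Hq : lam ^ (halving_time lam * 2) <= 1/4).
  { rewrite pow_mult. assert (0 <= lam ^ halving_time lam) by (apply pow_le; lra). simpl. nra. }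
  assert (Hpow : (lam ^ (halving_time lam * 2)) ^ log4_time n <= (1/4) ^ log4_time n)
    by (apply pow_incr; split; [apply pow_le |]; lra).
  assert (Hp4 : 0 < 4 ^ log4_time n) by (apply pow_lt; lra).
  replace ((1/4) ^ log4_time n) with (/ 4 ^ log4_time n) in Hpow
    by (unfold Rdiv; rewrite Rmult_1_l, pow_inv; reflexivity).
  apply Rle_trans with (/ 4 ^ log4_time n * INR n); [apply Rmult_le_compat_r; lra |].
  apply (Rmult_le_reg_l (4 ^ log4_time n)); auto.
  rewrite <- Rmult_assoc, Rinv_r by lra. lra.
Qed.

Lemma escape_time_spec k : (1 <= k)%nat -> (k <= n)%nat ->
  decay_rate n lam k ^ escape_time n lam k <= 1 / 16.
Proof.
  intros Hk1 Hkn. assert (Hn := INR_n_ge_2).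
  assert (Hk : 1 <= INR k) by (replace 1 with (INR 1) by (simpl; lra); apply le_INR; auto).
  set (a := (1 - lam ^ 2) * INR k / INR n).
  assert (Ha : 0 <= a <= 1).
  { assert (Hr := decay_rate_bounds n lam k ltac:(lia) (conj Hl0 Hl1) Hkn).
    unfold decay_rate in Hr. fold a in Hr. lra. }
  assert (Hr : 0 <= 15 * INR n / ((1 - lam) * INR k))
    by (apply Rmult_le_pos; [lra | apply Rlt_le, Rinv_0_lt_compat; nra]).
  destruct (ceil_nat_spec _ Hr) as [Hc1 _]. fold (escape_time n lam k) in Hc1.
  assert (H := pow_le_of_mul_ge a (escape_time n lam k) 15 Ha).
  unfold decay_rate. fold a. apply (Rmult_le_reg_r 16); [lra |].
  replace (1 / 16 * 16) with 1 by field. replace 16 with (1 + 15) by ring. apply H.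
  apply Rle_trans with (15 * INR n / ((1 - lam) * INR k) * a).
  - unfold a. replace (15 * INR n / ((1 - lam) * INR k) * ((1 - lam ^ 2) * INR k / INR n))
      with (15 * (1 + lam)) by (field; repeat split; lra). nra.
  - apply Rmult_le_compat_r; lra.
Qed.

Lemma mixing_time_le : INR (mixing_time n lam) <= 14 * L * ia.
Proof.
  destruct halving_time_spec as [_ Ht1]. assert (Hm := log4_time_le).
  assert (Hia := inv_gap_ge_1). assert (HL := ln_n_gt_half).
  unfold mixing_time. rewrite mult_INR.
  assert (0 <= INR (halving_time lam)) by apply pos_INR.
  assert (0 <= INR (log4_time n)) by apply pos_INR.
  apply Rle_trans with ((ia + 1) * (3 + L)); [apply Rmult_le_compat; auto | nra].
Qed.

Lemma hit_time_S_le j :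
  INR (hit_time n lam (S j)) <= 15 * INR n * ia * / INR (S j) + 1 + INR (mixing_time n lam).
Proof.
  unfold hit_time. rewrite plus_INR.
  assert (HSj : 0 < INR (S j)) by (apply lt_0_INR; lia).
  destruct (ceil_nat_spec (15 * INR n / ((1 - lam) * INR (S j)))) as [_ H].
  - pose proof INR_n_ge_2.
    apply Rmult_le_pos; [lra | apply Rlt_le, Rinv_0_lt_compat, Rmult_lt_0_compat; lra].
  - fold (escape_time n lam (S j)) in H.
    replace (15 * INR n / ((1 - lam) * INR (S j))) with (15 * INR n * ia * / INR (S j)) in H
      by (unfold ia; field; lra).
    lra.
Qed.

(* The harmonic sum over k of n / k is where the n log n comes from. *)
Lemma hit_budget_le : hit_budget n lam (S n) <= 200 * (INR n * ln (INR n)) / (1 - lam).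
Proof.
  assert (Hn := INR_n_ge_2). assert (HL := ln_n_gt_half). assert (Hia := inv_gap_ge_1).
  assert (Hmix := mixing_time_le). fold L.
  unfold hit_budget. rewrite rsum_Sl.
  replace (2 * INR (hit_time n lam 0)) with 0 by (simpl; ring). rewrite Rplus_0_l.
  apply Rle_trans with (rsum n (fun j => 2 * (15 * INR n * ia * / INR (S j) + 1 +
                                            INR (mixing_time n lam)))).
  - apply rsum_le. intros j _. pose proof (hit_time_S_le j). lra.
  - rewrite rsum_mult_l, !rsum_add, !rsum_const, rsum_mult_l.
    assert (Hh := harmonic_le n ltac:(lia)). fold L in Hh.
    assert (0 <= 15 * INR n * ia) by nra.
    assert (15 * INR n * ia * rsum n (fun j => / INR (S j)) <= 15 * INR n * ia * (1 + L))
      by (apply Rmult_le_compat_l; auto).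
    replace (200 * (INR n * L) / (1 - lam)) with (200 * INR n * L * ia) by (unfold ia; field; lra).
    assert (INR n * INR (mixing_time n lam) <= INR n * (14 * L * ia))
      by (apply Rmult_le_compat_l; lra).
    nra.
Qed.

End Budget.

Definition unused_vertex (n : nat) (adj : nat -> nat -> bool) (h : list nat) (v : nat) : bool :=
  existsb (fun w => isE n adj v w && negb (traversed h v w)) (seq 0 n).

Definition unused_edge (n : nat) (adj : nat -> nat -> bool) (h : list nat) (u v : nat) : R :=
  if Nat.ltb u v && isE n adj u v && negb (traversed h u v) then 1 else 0.

Definition unused_count (n : nat) (adj : nat -> nat -> bool) (h : list nat) : R :=
  rsum n (fun u => rsum n (fun v => unused_edge n adj h u v)).

(* Twice the expected time, truncated at hit_time, for the walk from x to hit U. *)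
Definition hit_potential (n d : nat) (adj : nat -> nat -> bool) (lam : R) (U : nat -> bool)
    (x : nat) : R :=
  2 * rsum (hit_time n lam (card_pred n U)) (fun t => avoid n d adj U t x).

Definition potential (n d : nat) (adj : nat -> nat -> bool) (lam : R) (h : list nat) : R :=
  unused_count n adj h + hit_budget n lam (card_pred n (unused_vertex n adj h)) +
  hit_potential n d adj lam (unused_vertex n adj h) (cur h).

Lemma INR_list_sum_seq (F : nat -> nat) k :
  INR (list_sum (map F (seq 0 k))) = rsum k (fun u => INR (F u)).
Proof.
  induction k; auto.
  rewrite seq_S, map_app, list_sum_app, plus_INR, IHk. simpl. rewrite Nat.add_0_r. reflexivity.
Qed.

Lemma unused_count_init n adj v0 : unused_count n adj [v0] = INR (edge_count n adj).
Proof.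
  unfold edge_count. rewrite INR_list_sum_seq. apply rsum_ext. intros u _.
  rewrite length_filter_seq. apply rsum_ext. intros v _.
  unfold unused_edge. rewrite andb_true_r. reflexivity.
Qed.

Lemma unused_count_nonneg n adj h : 0 <= unused_count n adj h.
Proof.
  apply rsum_nonneg; intros; apply rsum_nonneg; intros.
  unfold unused_edge. destruct (_ && _); lra.
Qed.

Lemma unused_edge_app_le n adj h w u v : h <> [] ->
  unused_edge n adj (h ++ [w]) u v <= unused_edge n adj h u v.
Proof.
  intros Hh. unfold unused_edge. destruct (traversed h u v) eqn:E.
  - rewrite (traversed_app_mono h [w] u v Hh E), !andb_false_r. lra.
  - rewrite andb_true_r. destruct (Nat.ltb u v && isE n adj u v); simpl; [| lra].
    destruct (traversed (h ++ [w]) u v); simpl; lra.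
Qed.

Lemma unused_count_step n adj h w : simple_graph n adj -> h <> [] ->
  unused_at n adj h w = true -> unused_count n adj (h ++ [w]) + 1 <= unused_count n adj h.
Proof.
  intros Hs Hh Hw. set (x := cur h) in *.
  unfold unused_at in Hw. fold x in Hw. apply andb_prop in Hw as [Hxw Hnt].
  apply negb_true_iff in Hnt.
  destruct (isE_inv _ _ _ _ Hxw) as [Hx [Hwn _]].
  assert (Hxw' : x <> w) by (intro E; subst; rewrite isE_irrefl in Hxw; auto; discriminate).
  assert (Htr' := traversed_last h w Hh). fold x in Htr'.
  set (a := Nat.min x w). set (b := Nat.max x w).
  assert (Hab : (a < b)%nat /\ isE n adj a b = true /\ traversed h a b = false /\
                traversed (h ++ [w]) a b = true).
  { unfold a, b. destruct (Nat.le_gt_cases x w).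
    - rewrite Nat.min_l, Nat.max_r by lia. repeat split; auto; lia.
    - rewrite Nat.min_r, Nat.max_l by lia.
      rewrite (isE_sym n adj w x Hs), (traversed_sym h), (traversed_sym (h ++ [w])).
      repeat split; auto; lia. }
  destruct Hab as [Hlt [Hisab [Hab1 Hab2]]].
  unfold unused_count.
  apply (rsum_le_gap n _ _ a);
    [intros; apply rsum_le; intros; apply unused_edge_app_le; auto | lia |].
  apply (rsum_le_gap n _ _ b); [intros; apply unused_edge_app_le; auto | lia |].
  unfold unused_edge. rewrite Hab2, Hab1, Hisab. apply Nat.ltb_lt in Hlt. rewrite Hlt. simpl. lra.
Qed.

Lemma unused_vertex_app n adj h w v : h <> [] ->
  unused_vertex n adj (h ++ [w]) v = true -> unused_vertex n adj h v = true.
Proof.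
  intros Hh H. unfold unused_vertex in *. apply existsb_exists in H as [w' [Hin H]].
  apply existsb_exists. exists w'. split; auto.
  apply andb_prop in H as [H1 H2]. rewrite H1. simpl.
  destruct (traversed h v w') eqn:E; auto.
  rewrite (traversed_app_mono h [w] v w' Hh E) in H2. discriminate.
Qed.

Lemma unused_vertex_card_pos n adj h : covered n adj h = false ->
  (1 <= card_pred n (unused_vertex n adj h))%nat.
Proof.
  intros Hc. destruct (not_covered_edge n adj h Hc) as [u [v [Huv Htr]]].
  destruct (isE_inv _ _ _ _ Huv) as [Hu [Hv _]].
  apply (card_pred_pos n _ u); auto. apply existsb_exists. exists v.
  split; [apply in_seq; lia |]. rewrite Huv, Htr. reflexivity.
Qed.

(* With no unused edge at cur h, the edge {cur h, w} was already traversed. *)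
Lemma random_step_traversed n adj h w : h <> [] -> has_unused n adj h = false ->
  isE n adj (cur h) w = true -> traversed (h ++ [w]) = traversed h.
Proof.
  intros Hh Hu Hw.
  assert (Htr : traversed h (cur h) w = true).
  { destruct (traversed h (cur h) w) eqn:E; auto.
    assert (Hex : has_unused n adj h = true); [| congruence].
    apply existsb_exists. exists w. split.
    - apply in_seq. apply isE_inv in Hw. lia.
    - unfold unused_at. rewrite Hw, E. reflexivity. }
  apply functional_extensionality; intros u. apply functional_extensionality; intros v.
  rewrite traversed_app by auto.
  destruct (same_edge (cur h, w) u v) eqn:Es; [| apply orb_false_r].
  rewrite orb_true_r. unfold same_edge in Es. simpl in Es.
  apply orb_prop in Es as [Es | Es]; apply andb_prop in Es as [E1 E2];
    apply Nat.eqb_eq in E1; apply Nat.eqb_eq in E2; subst; auto.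
  rewrite traversed_sym. auto.
Qed.

Section Drift.
Context (n d : nat) (adj : nat -> nat -> bool) (lam : R) (Rl : rule).
Hypothesis Hs : simple_graph n adj.
Hypothesis Hreg : regular n d adj.
Hypothesis Hd : (1 <= d)%nat.
Hypothesis Hn2 : (2 <= n)%nat.
Hypothesis Hl0 : 0 <= lam.
Hypothesis Hl1 : lam < 1.
Hypothesis Hspec : forall f, inner n (Aop n d adj f) (Aop n d adj f) <=
  lam^2 * inner n f f + (1 - lam^2) * (inner n f (fun _ => 1))^2 / INR n.
Hypothesis Hval : valid_rule n adj Rl.

Let hpot := hit_potential n d adj lam.
Let Phi := potential n d adj lam.

Lemma hit_potential_bounds U x : 0 <= hpot U x <= 2 * INR (hit_time n lam (card_pred n U)).
Proof.
  unfold hpot, hit_potential. split.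
  - apply Rmult_le_pos; [lra |]. apply rsum_nonneg. intros. apply avoid_bounds; auto.
  - apply Rmult_le_compat_l; [lra |]. rewrite <- (Rmult_1_r (INR _)), <- rsum_const.
    apply rsum_le. intros. apply avoid_bounds; auto.
Qed.

Lemma hit_potential_in U x : U x = true -> hpot U x = 0.
Proof.
  intros H. unfold hpot, hit_potential.
  rewrite (rsum_ext _ _ (fun _ => 0)) by (intros; apply avoid_in; auto).
  rewrite rsum_zero. ring.
Qed.

(* Shifting the sum by one step trades avoid U 0 x = 1 for avoid U T x <= 1/2, and the
   factor 2 turns the gain 1/2 into the unit needed for the drift. *)
Lemma hit_potential_superharmonic U x : (x < n)%nat -> U x = false ->
  (1 <= card_pred n U)%nat -> 1 + Aop n d adj (hpot U) x <= hpot U x.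
Proof.
  intros Hx HU Hk.
  set (T := hit_time n lam (card_pred n U)). set (g := avoid n d adj U).
  assert (HA : Aop n d adj (hpot U) x = 2 * rsum T (fun t => g (S t) x)).
  { unfold Aop, hpot, hit_potential. fold T g.
    rewrite (rsum_ext _ _ (fun w => 2 * rsum T (fun t =>
        (if isE n adj x w then / INR d else 0) * g t w)))
      by (intros w _; rewrite rsum_mult_l; ring).
    rewrite rsum_mult_l, rsum_swap. f_equal. apply rsum_ext. intros t _.
    unfold g. simpl. rewrite HU. reflexivity. }
  assert (Hshift : rsum T (fun t => g (S t) x) = rsum T (fun t => g t x) - g 0%nat x + g T x)
    by (assert (E := rsum_Sl T (fun t => g t x)); cbn [rsum] in E; lra).
  assert (Hg0 : g 0%nat x = 1) by (unfold g; simpl; rewrite HU; reflexivity).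
  assert (HgT : g T x <= 1/2).
  { unfold T. destruct (card_pred n U) as [| k] eqn:Ek; [lia |]. unfold hit_time. rewrite <- Ek.
    apply (avoid_le_half n d adj lam Hs Hreg Hd ltac:(lia) Hl0 Hl1 Hspec U); auto.
    - rewrite Ek. apply escape_time_spec; auto; try lia. rewrite <- Ek. apply card_pred_le.
    - apply mixing_time_spec; auto. }
  rewrite HA. unfold hpot, hit_potential. fold T g. rewrite Hshift, Hg0. lra.
Qed.

(* The budget of the levels between |U'| and |U| pays for the new hitting potential. *)
Lemma hit_terms_shrink U U' w : (forall v, (v < n)%nat -> U' v = true -> U v = true) ->
  (w < n)%nat -> U w = true ->
  hit_budget n lam (card_pred n U') + hpot U' w <= hit_budget n lam (card_pred n U).
Proof.
  intros Hsub Hw HUw. destruct (U' w) eqn:EU'.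
  - rewrite hit_potential_in, Rplus_0_r by auto. apply hit_budget_mono, card_pred_mono; auto.
  - assert (Hlt : (card_pred n U' < card_pred n U)%nat) by (apply (card_pred_lt n _ _ w); auto).
    apply Rle_trans with (hit_budget n lam (S (card_pred n U'))).
    + rewrite hit_budget_S. pose proof (hit_potential_bounds U' w). lra.
    + apply hit_budget_mono. lia.
Qed.

Lemma potential_nonneg h : 0 <= Phi h.
Proof.
  unfold Phi, potential. assert (H1 := unused_count_nonneg n adj h).
  assert (H2 := hit_budget_nonneg n lam (card_pred n (unused_vertex n adj h))).
  assert (H3 := hit_potential_bounds (unused_vertex n adj h) (cur h)). fold hpot. lra.
Qed.

Lemma potential_greedy_step h w : h <> [] -> unused_at n adj h w = true ->
  Phi (h ++ [w]) + 1 <= Phi h.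
Proof.
  intros Hh Hw.
  assert (Hunused := unused_count_step n adj h w Hs Hh Hw).
  unfold unused_at in Hw. apply andb_prop in Hw as [Hxw Hnt].
  destruct (isE_inv _ _ _ _ Hxw) as [_ [Hwn _]].
  assert (HUw : unused_vertex n adj h w = true).
  { apply existsb_exists. exists (cur h). split; [apply in_seq; apply isE_inv in Hxw; lia |].
    rewrite isE_sym, Hxw, traversed_sym by auto. exact Hnt. }
  assert (Hhit := hit_terms_shrink (unused_vertex n adj h) (unused_vertex n adj (h ++ [w])) w
    (fun v _ => unused_vertex_app n adj h w v Hh) Hwn HUw).
  assert (H0 := hit_potential_bounds (unused_vertex n adj h) (cur h)).
  unfold Phi, potential. rewrite cur_app. fold hpot. lra.
Qed.

Lemma potential_random_step h : h <> [] -> (cur h < n)%nat -> covered n adj h = false ->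
  has_unused n adj h = false ->
  1 + rsum n (fun w => trans n d adj Rl h w * Phi (h ++ [w])) <= Phi h.
Proof.
  intros Hh Hx Hc Hu.
  set (x := cur h) in *. set (U := unused_vertex n adj h).
  assert (HUx : U x = false) by exact Hu.
  set (c := unused_count n adj h + hit_budget n lam (card_pred n U)).
  unfold trans. rewrite Hu. fold x.
  rewrite (rsum_ext _ _ (fun w => (if isE n adj x w then / INR d else 0) *
                                  (c * 1 + 1 * hpot U w))).
  2:{ intros w Hw. destruct (isE n adj x w) eqn:E; [| ring].
      unfold c, U, hpot, Phi, potential, unused_count, unused_edge, unused_vertex.
      rewrite (random_step_traversed n adj h w Hh Hu E), cur_app. ring. }
  fold (Aop n d adj (fun w => c * 1 + 1 * hpot U w) x).
  rewrite Aop_lin, Aop_one by auto.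
  assert (H := hit_potential_superharmonic U x Hx HUx (unused_vertex_card_pos n adj h Hc)).
  unfold Phi, potential. fold U x hpot c. lra.
Qed.

Lemma potential_drift h : h <> [] -> (cur h < n)%nat -> covered n adj h = false ->
  1 + rsum n (fun w => trans n d adj Rl h w * Phi (h ++ [w])) <= Phi h.
Proof.
  intros Hh Hx Hc. destruct (has_unused n adj h) eqn:Hu; [| apply potential_random_step; auto].
  destruct (Hval h Hu) as [Hnn [Hsupp Hsum]].
  unfold trans. rewrite Hu.
  apply Rle_trans with (1 + rsum n (fun w => Rl h w * (Phi h - 1))).
  - apply Rplus_le_compat_l, rsum_le. intros w Hw.
    destruct (Req_dec (Rl h w) 0) as [E | E]; [rewrite E; lra |].
    apply Rmult_le_compat_l; auto.
    pose proof (potential_greedy_step h w Hh (Hsupp w E)). lra.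
  - rewrite rsum_mult_r, Hsum. lra.
Qed.

Lemma potential_init v0 : Phi [v0] <= INR (edge_count n adj) + hit_budget n lam (S n).
Proof.
  unfold Phi, potential. rewrite unused_count_init.
  set (U := unused_vertex n adj [v0]).
  assert (H1 := hit_potential_bounds U (cur [v0])).
  assert (hit_budget n lam (card_pred n U) + 2 * INR (hit_time n lam (card_pred n U))
          <= hit_budget n lam (S n)).
  { rewrite <- hit_budget_S. apply hit_budget_mono. pose proof (card_pred_le n U). lia. }
  fold hpot. lra.
Qed.

End Drift.

Lemma edge_degree_pos n d adj u v : regular n d adj -> isE n adj u v = true -> (1 <= d)%nat.
Proof.
  intros Hreg Huv. destruct (isE_inv _ _ _ _ Huv) as [Hu [Hv _]].
  assert (H := regular_degree n d adj u Hreg Hu).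
  assert (1 <= rsum n (fun w => if isE n adj u w then 1 else 0)).
  { apply Rle_trans with ((fun w => if isE n adj u w then 1 else 0) v); [rewrite Huv; lra |].
    apply (rsum_term_le n (fun w => if isE n adj u w then 1 else 0)); auto.
    intros j _; destruct (isE n adj u j); lra. }
  destruct d; [simpl in H; lra | lia].
Qed.

Lemma edge_order_ge_2 n adj u v : simple_graph n adj -> isE n adj u v = true -> (2 <= n)%nat.
Proof.
  intros Hs Huv. destruct (isE_inv _ _ _ _ Huv) as [Hu [Hv _]].
  assert (u <> v) by (intro E; subst; rewrite isE_irrefl in Huv; auto; discriminate).
  lia.
Qed.

Lemma cover_bound_nonneg n m lam C : (1 <= n)%nat -> lam < 1 -> 0 < C ->
  0 <= INR m + C * (INR n * ln (INR n)) / (1 - lam).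
Proof.
  intros Hn Hl HC.
  assert (0 <= INR m) by apply pos_INR.
  assert (Hn1 : 1 <= INR n) by (replace 1 with (INR 1) by reflexivity; apply le_INR; lia).
  assert (0 <= ln (INR n)) by (rewrite <- ln_1; apply ln_le; lra).
  assert (0 <= C * (INR n * ln (INR n)) / (1 - lam)); [| lra].
  apply Rmult_le_pos; [apply Rmult_le_pos; nra | apply Rlt_le, Rinv_0_lt_compat; lra].
Qed.

Theorem mainTheorem4 :
  exists C : R, 0 < C /\
    forall (n d : nat) (adj : nat -> nat -> bool) (lam : R),
      expander n d adj lam ->
      connected n adj ->
      forall Rl : rule, valid_rule n adj Rl ->
      forall v0 : nat, (v0 < n)%nat ->
        expected_cover_le n d adj Rl v0
          (INR (edge_count n adj) + C * (INR n * ln (INR n)) / (1 - lam)).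
Proof.
  exists 200. split; [lra |].
  intros n d adj lam [Hs [Hreg [Hgap Hl1]]] _ Rl Hval v0 Hv0.
  destruct (covered n adj [v0]) eqn:Hc0.
  { apply expected_cover_le_covered; auto. apply cover_bound_nonneg; auto; lia || lra. }
  destruct (not_covered_edge n adj [v0] Hc0) as [u [v [Huv _]]].
  assert (Hd := edge_degree_pos n d adj u v Hreg Huv).
  assert (Hn2 := edge_order_ge_2 n adj u v Hs Huv).
  destruct Hgap as [mu [vec [Horth [Heig [_ Hmu]]]]].
  assert (Hl0 : 0 <= lam)
    by (pose proof (Hmu 1%nat ltac:(lia) ltac:(lia)); pose proof (Rabs_pos (mu 1%nat)); lra).
  assert (Hspec := Aop_sqnorm_le n d adj lam mu vec Hs Hreg Hd ltac:(lia) Horth Heig Hmu Hl1).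
  apply (expected_cover_le_of_potential n d adj Rl Hreg Hd Hval (potential n d adj lam));
    auto using potential_nonneg.
  - intros h Hh Hx Hc. apply potential_drift; auto.
  - eapply Rle_trans; [apply potential_init; auto |].
    pose proof (hit_budget_le n lam Hn2 Hl0 Hl1). lra.
Qed.
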